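(* Let $G$ be a connected vertex-transitive graph with at least one edge. Then $\mathrm{ldim}_f(G)=\frac{|V(G)|}{l(G)}$, where $l(G)=\min\{|L(uv)|: uv\in E(G)\}$.
   Context: All graphs are finite and simple; $d$ is the shortest-path distance. $G$ is vertex-transitive if its automorphism group acts transitively on $V(G)$. For an edge $uv$, $L(uv)=\{x\in V(G): d(u,x)\neq d(v,x)\}$. A function $f:V(G)\to[0,1]$ is a local resolving function if $\sum_{x\in L(uv)}f(x)\geq 1$ for every edge $uv$; $\mathrm{ldim}_f(G)$ is the minimum of $\sum_v f(v)$ over all local resolving functions. *)

From HB Require Import structures.
From mathcomp Require Import all_boot all_order all_algebra all_fingroup.
Set Implicit Arguments. Unset Strict Implicit. Unset Printing Implicit Defensive.
Import Order.TTheory GRing.Theory Num.Theory.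

(* A simple graph is a symmetric irreflexive relation e on a finType T. *)

Definition reach (T : finType) (e : rel T) (u v : T) (n : nat) : bool :=
  [exists p : n.-tuple T, path e u p && (last u p == v)].

(* Shortest-path distance: least n with a walk of length n from u to v.
   (Searched among 0 .. #|T|-1, which suffices in a connected graph;
   unreachable vertices get distance #|T|.) *)
Definition dist (T : finType) (e : rel T) (u v : T) : nat :=
  find (reach e u v) (iota 0 #|T|).

Definition Lset (T : finType) (e : rel T) (u v : T) : {set T} :=
  [set x | dist e u x != dist e v x].

(* l(G) = min { |L(uv)| : uv in E(G) } (the default #|T| is an upper bound
   of every |L(uv)|, so it does not affect the min when E(G) is nonempty). *)
Definition lG (T : finType) (e : rel T) : nat :=
  \big[minn/#|T|]_(p : T * T | e p.1 p.2) #|Lset e p.1 p.2|.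

Definition connected_graph (T : finType) (e : rel T) : Prop :=
  forall u v : T, connect e u v.

Definition vertex_transitive (T : finType) (e : rel T) : Prop :=
  forall u v : T, exists g : {perm T},
    (forall x y, e (g x) (g y) = e x y) /\ g u = v.

Definition local_resolving (R : realFieldType) (T : finType) (e : rel T)
    (f : T -> R) : Prop :=
  (forall x, 0 <= f x <= 1)%R /\
  (forall u v, e u v -> (1 <= \sum_(x in Lset e u v) f x)%R).

Definition is_ldimf (R : realFieldType) (T : finType) (e : rel T) (m : R) : Prop :=
  (exists f : T -> R, local_resolving e f /\ (\sum_x f x)%R = m) /\
  (forall f : T -> R, local_resolving e f -> (m <= \sum_x f x)%R).

(* Averaging over the automorphism group.  For a local resolving function f
   put c(x) = sum over automorphisms g of f(g x); vertex-transitivity makes c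
   constant, and summing over all x gives |V| c = |Aut| sum f.  Automorphisms
   preserve distances, so each g maps L(uv) onto L(g u, g v), and summing the
   covering condition of the edge (g u)(g v) over all g gives
   |Aut| <= |L(uv)| c.  Hence |V| <= |L(uv)| sum f for every edge uv, and taking
   an edge with |L(uv)| = l(G) gives the lower bound; the constant function
   1/l(G) attains it. *)

From HB Require Import structures.
From mathcomp Require Import all_boot all_order all_algebra all_fingroup.
Import Order.TTheory GRing.Theory Num.Theory.
Set Implicit Arguments. Unset Strict Implicit.

Section GraphAutomorphisms.
Variables (T : finType) (e : rel T).

Definition graph_aut (g : {perm T}) : bool :=
  [forall x, forall y, e (g x) (g y) == e x y].

Lemma graph_autP (g : {perm T}) :
  reflect (forall x y, e (g x) (g y) = e x y) (graph_aut g).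
Proof.
apply: (iffP forallP) => [autg x y | autg x]; last by apply/forallP => y; rewrite autg.
by move/forallP: (autg x) => /(_ y) /eqP.
Qed.

Lemma graph_aut1 : graph_aut 1%g.
Proof. by apply/graph_autP => x y; rewrite !perm1. Qed.

Lemma graph_autV (g : {perm T}) : graph_aut g -> graph_aut g^-1.
Proof. by move/graph_autP=> autg; apply/graph_autP => x y; rewrite -autg !permKV. Qed.

Lemma graph_autMl (g h : {perm T}) : graph_aut h -> graph_aut (h * g)%g = graph_aut g.
Proof.
move=> auth; have /graph_autP autVh := graph_autV auth.
apply/graph_autP/graph_autP => autg x y; last by rewrite !permM autg (graph_autP _ auth).
by have := autg (h^-1 x)%g (h^-1 y)%g; rewrite !permM !permKV => ->; exact: autVh.
Qed.

Lemma reach_aut (g : {perm T}) u v n :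
  graph_aut g -> reach e (g u) (g v) n = reach e u v n.
Proof.
suff reach_autW h x y : graph_aut h -> reach e x y n -> reach e (h x) (h y) n.
  move=> autg; apply/idP/idP; last exact: reach_autW.
  by move/(reach_autW _ _ _ (graph_autV autg)); rewrite !permK.
move=> /graph_autP auth /existsP[p /andP[pathp /eqP lastp]]; apply/existsP.
exists (map_tuple h p); rewrite /= last_map lastp eqxx andbT.
by rewrite (map_path (e' := e) (b := pred0)) //; apply/hasPn.
Qed.

Lemma dist_aut (g : {perm T}) u v : graph_aut g -> dist e (g u) (g v) = dist e u v.
Proof. by move=> autg; apply: eq_find => n; exact: reach_aut. Qed.

Lemma mem_Lset_aut (g : {perm T}) u v x :
  graph_aut g -> (g x \in Lset e (g u) (g v)) = (x \in Lset e u v).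
Proof. by move=> autg; rewrite !inE !dist_aut. Qed.

End GraphAutomorphisms.

Section Distance.
Variables (T : finType) (e : rel T).

Lemma dist_eq0 u v : (dist e u v == 0) = (u == v).
Proof.
rewrite /dist; have : 0 < #|T| by apply/card_gt0P; exists u.
case: #|T| => // n _ /=; case: ifP => [/existsP[p /andP[_ /eqP]] | reach0].
  by rewrite (tuple0 p) /= => ->; rewrite !eqxx.
apply/esym/negbTE; apply: contraFN reach0 => /eqP <-.
by apply/existsP; exists [tuple] => /=.
Qed.

Lemma dist_refl u : dist e u u = 0.
Proof. by apply/eqP; rewrite dist_eq0. Qed.

Lemma mem_Lset_edge u v : u != v -> u \in Lset e u v.
Proof. by move=> neq_uv; rewrite inE dist_refl eq_sym (dist_eq0 v u) eq_sym. Qed.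

End Distance.

Section MinimumResolvingSize.
Variables (T : finType) (e : rel T).
Hypothesis e_irr : irreflexive e.

Lemma card_Lset_edge_gt0 u v : e u v -> 0 < #|Lset e u v|.
Proof.
move=> uv; apply/card_gt0P; exists u; apply: mem_Lset_edge.
by apply: contraTneq uv => ->; rewrite e_irr.
Qed.

Lemma lG_le u v : e u v -> lG e <= #|Lset e u v|.
Proof.
move=> uv; exact: (bigmin_le_cond #|T| (j := (u, v)) (P := fun p : T * T => e p.1 p.2) _ uv).
Qed.

Lemma lG_attained : (exists u v, e u v) -> exists u v, e u v /\ #|Lset e u v| = lG e.
Proof.
case=> u0 [v0 uv0]; rewrite /lG (bigmin_eq_arg _ (u0, v0)) // => [|p _]; last exact: max_card.
by case: arg_minP => // p; exists p.1, p.2.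
Qed.

Lemma lG_gt0 : (exists u v, e u v) -> 0 < lG e.
Proof.
by move/lG_attained => [u [v [uv <-]]]; exact: card_Lset_edge_gt0.
Qed.

End MinimumResolvingSize.

Local Open Scope ring_scope.

Section Averaging.
Variables (R : realFieldType) (T : finType) (e : rel T) (f : T -> R).
Hypothesis vt : vertex_transitive e.

Let orbit_sum x := \sum_(g | graph_aut e g) f (g x).

Lemma orbit_sum_const x y : orbit_sum x = orbit_sum y.
Proof.
have [h [/graph_autP auth hx]] := vt x y.
rewrite /orbit_sum (reindex_inj (mulgI h)) /=.
by apply: eq_big => g; rewrite ?graph_autMl // permM hx.
Qed.

Lemma sum_orbit_sum_set (A : {pred T}) x0 :
  \sum_(g | graph_aut e g) \sum_(x in A) f (g x) = #|A|%:R * orbit_sum x0.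
Proof.
rewrite exchange_big /= (eq_bigr (fun _ => orbit_sum x0)) => [|x _].
  by rewrite sumr_const mulr_natl.
exact: orbit_sum_const.
Qed.

Lemma card_mul_orbit_sum x0 :
  #|T|%:R * orbit_sum x0 = #|graph_aut e|%:R * \sum_x f x.
Proof.
rewrite -sum_orbit_sum_set (eq_bigr (fun _ => \sum_x f x)) => [|g _].
  by rewrite sumr_const mulr_natl.
by rewrite [RHS](reindex_inj (@perm_inj _ g)).
Qed.

Lemma card_le_Lset_mul_sum u v :
  (forall u v, e u v -> 1 <= \sum_(x in Lset e u v) f x) ->
  e u v -> #|T|%:R <= #|Lset e u v|%:R * \sum_x f x.
Proof.
move=> fL uv.
have card_aut_gt0 : 0 < #|graph_aut e|%:R :> R.
  by rewrite ltr0n; apply/card_gt0P; exists 1%g; exact: graph_aut1.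
have covered : #|graph_aut e|%:R <= #|Lset e u v|%:R * orbit_sum u.
  rewrite -sum_orbit_sum_set -sumr_const; apply: ler_sum => g autg.
  have := fL (g u) (g v); rewrite (graph_autP _ _ autg) => /(_ uv).
  rewrite (reindex_inj (@perm_inj _ g)) /=.
  by rewrite (eq_bigl (mem (Lset e u v))) // => x; rewrite mem_Lset_aut.
rewrite -(ler_pM2l card_aut_gt0) mulrCA -(card_mul_orbit_sum u) mulrCA [X in X <= _]mulrC.
by rewrite ler_pM2l // ltr0n; apply/card_gt0P; exists u.
Qed.

End Averaging.

Lemma const_local_resolving (R : realFieldType) (T : finType) (e : rel T) :
  irreflexive e -> (exists u v, e u v) -> local_resolving e (fun _ => (lG e)%:R^-1 : R).
Proof.
move=> e_irr /(lG_gt0 e_irr) lG_gt0; have lG_pos : 0 < (lG e)%:R :> R by rewrite ltr0n.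
split=> [x | u v uv].
  by rewrite invr_ge0 ltW //= invr_le1 ?unitf_gt0 // ler1n.
by rewrite sumr_const -(mulr_natr _ #|_|) mulrC ler_pdivlMr // mul1r ler_nat lG_le.
Qed.

Theorem theorem2p15 (R : realFieldType) (T : finType) (e : rel T)
    (e_sym : symmetric e) (e_irr : irreflexive e)
    (conn : connected_graph e) (vt : vertex_transitive e)
    (has_edge : exists u v, e u v) :
  @is_ldimf R T e ((#|T|)%:R / (lG e)%:R)%R.
Proof.
have lG_pos : 0 < (lG e)%:R :> R by rewrite ltr0n lG_gt0.
split.
  exists (fun _ => (lG e)%:R^-1); split; first exact: const_local_resolving.
  by rewrite sumr_const [RHS]mulrC mulr_natr.
move=> f [_ fL]; have [u [v [uv Luv]]] := lG_attained has_edge.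
by rewrite ler_pdivrMr // mulrC -Luv card_le_Lset_mul_sum.
Qed.
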